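(* Let $\mathfrak{g}_\alpha$, $-1\le\alpha\le1$, be the eight-dimensional real Lie algebras with basis $\{X_1,\dots,X_8\}$ and nonzero brackets $[X_1,X_2]=2X_2$, $[X_1,X_3]=-2X_3$, $[X_2,X_3]=X_1$, $[X_1,X_4]=X_4$, $[X_1,X_5]=-X_5$, $[X_1,X_6]=X_6$, $[X_1,X_7]=-X_7$, $[X_2,X_5]=X_4$, $[X_2,X_7]=X_6$, $[X_3,X_4]=X_5$, $[X_3,X_6]=X_7$, $[X_4,X_8]=X_4$, $[X_5,X_8]=X_5$, $[X_6,X_8]=\alpha X_6$, $[X_7,X_8]=\alpha X_7$, and let $b_2(\mathfrak{g})=\dim H^2(\mathfrak{g},\mathbb{R})$. Then: (i) for $\alpha\ne-1,0$, the (linear) deformations $\mathfrak{g}_{-1}\to\mathfrak{g}_\alpha$ decrease $b_2$ by one, i.e. $b_2(\mathfrak{g}_\alpha)=b_2(\mathfrak{g}_{-1})-1$; (ii) for $\alpha\ne-1,0$ and $\beta\in\{0,-1\}$, the (linear) deformations $\mathfrak{g}_\alpha\to\mathfrak{g}_\beta$ increase $b_2$ by one, i.e. $b_2(\mathfrak{g}_\beta)=b_2(\mathfrak{g}_\alpha)+1$; (iii) the (linear) deformation $\mathfrak{g}_{-1}\to\mathfrak{g}_0$ preserves $b_2$, i.e. $b_2(\mathfrak{g}_0)=b_2(\mathfrak{g}_{-1})$.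
   Context: $H^2(\mathfrak{g},\mathbb{R})$ denotes the second Lie algebra cohomology of $\mathfrak{g}$ with coefficients in the trivial module $\mathbb{R}$. A linear deformation $\mathfrak{g}\to\mathfrak{h}$ means that $\mathfrak{h}$ is isomorphic to a Lie algebra with bracket $[X,Y]+t\varphi(X,Y)$ on the underlying space of $\mathfrak{g}$, for a scalar $t$ and an integrable 2-cocycle $\varphi$ of $\mathfrak{g}$ with values in the adjoint module; for this family, $\mathfrak{g}_\alpha+\varepsilon\varphi$ with $\varphi(X_6,X_8)=X_6$, $\varphi(X_7,X_8)=X_7$ yields $\mathfrak{g}_{\alpha+\varepsilon}$. *)

(* Lie algebra g_alpha on R^8 (row vectors 'rV[R]_8),
   basis X_1..X_8 = standard unit vectors (index k-1). *)
From HB Require Import structures.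
From mathcomp Require Import all_boot all_order all_algebra.
From mathcomp Require Import reals.
Set Implicit Arguments. Unset Strict Implicit. Unset Printing Implicit Defensive.
Import Order.TTheory GRing.Theory Num.Theory.
Local Open Scope ring_scope.

Section LieAlg.
Variable R : fieldType.

Definition Xb (k : nat) : 'rV[R]_8 := delta_mx 0 (inord k.-1).

Definition br_up (a : R) (i j : nat) : 'rV[R]_8 :=
  match i, j with
  | 1, 2 => 2 *: Xb 2
  | 1, 3 => - (2 *: Xb 3)
  | 2, 3 => Xb 1
  | 1, 4 => Xb 4
  | 1, 5 => - Xb 5
  | 1, 6 => Xb 6
  | 1, 7 => - Xb 7
  | 2, 5 => Xb 4
  | 2, 7 => Xb 6
  | 3, 4 => Xb 5
  | 3, 6 => Xb 7
  | 4, 8 => Xb 4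
  | 5, 8 => Xb 5
  | 6, 8 => a *: Xb 6
  | 7, 8 => a *: Xb 7
  | _, _ => 0
  end.

Definition br_basis (a : R) (i j : nat) : 'rV[R]_8 :=
  if (i < j)%N then br_up a i j
  else if (j < i)%N then - br_up a j i else 0.

Definition lie_br (a : R) (x y : 'rV[R]_8) : 'rV[R]_8 :=
  \sum_(i < 8) \sum_(j < 8) (x 0 i * y 0 j) *: br_basis a i.+1 j.+1.

Definition e (i : 'I_8) : 'rV[R]_8 := delta_mx 0 i.

(* 2-cochains: bilinear forms w(x,y) = x *m w *m y^T, w : 'M_8.
   d2 w (x,y,z) = - w([x,y],z) + w([x,z],y) - w([y,z],x)  (trivial coeffs) *)
Definition bform (w : 'M[R]_8) (x y : 'rV[R]_8) : R := (x *m w *m y^T) 0 0.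

Definition d2 (a : R) (w : 'M[R]_8) : {ffun 'I_8 -> 'M[R]_8} :=
  [ffun i => \matrix_(j, k)
     (- bform w (lie_br a (e i) (e j)) (e k)
      + bform w (lie_br a (e i) (e k)) (e j)
      - bform w (lie_br a (e j) (e k)) (e i))].

Definition cocycle_cond (a : R) (w : 'M[R]_8) :
  'M[R]_8 * {ffun 'I_8 -> 'M[R]_8} := (w + w^T, d2 a w).

(* 1-cochains f : 'rV_8 (linear forms v |-> (v *m f^T) 0 0);
   d1 f (x,y) = - f([x,y]) *)
Definition d1 (a : R) (f : 'rV[R]_8) : 'M[R]_8 :=
  \matrix_(i, j) (- (lie_br a (e i) (e j) *m f^T) 0 0).

Definition Z2 (a : R) : {vspace 'M[R]_8} := lker (linfun (cocycle_cond a)).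
Definition B2 (a : R) : {vspace 'M[R]_8} := limg (linfun (d1 a)).

(* b_2(g_a) = dim H^2(g_a, R) = dim (Z^2 / B^2) *)
Definition b2 (a : R) : nat := (\dim (Z2 a) - \dim (Z2 a :&: B2 a))%N.

End LieAlg.

(* Write a 2-cocycle w by its entries w_pq
   = w(X_{p+1}, X_{q+1}).  The cocycle identities on basis triples force all
   but three entries to be those of the coboundary of an explicit 1-cochain,
   and tie the remaining ones by w_45 = - w_36, (1 + a) w_36 = 0, a w_56 = 0.
   Since [X4, X7] = [X6, X7] = 0, coboundaries vanish on the entries 36 and
   56, so X4*^X7* - X5*^X6* and X6*^X7* are never coboundaries.  The first
   is a cocycle exactly when a = -1, the second when a = 0; hence b2(g_a) is
   1 for a in {-1, 0} and 0 otherwise. *)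

From HB Require Import structures.
From mathcomp Require Import all_boot all_order all_algebra.
From mathcomp Require Import reals.
From mathcomp Require Import ring lra.
Set Implicit Arguments. Unset Strict Implicit. Unset Printing Implicit Defensive.
Import Order.TTheory GRing.Theory Num.Theory.
Local Open Scope ring_scope.

Section SkewMatrices.
Variables (F : numFieldType) (n : nat).

Definition skew_mx (W : nat -> nat -> F) : 'M[F]_n.+1 :=
  \matrix_(i, j) if (i < j)%N then W i j else if (j < i)%N then - W j i else 0.

Lemma skew_mx_inord W p q : (p <= n)%N -> (q <= n)%N ->
  skew_mx W (inord p) (inord q) =
    if (p < q)%N then W p q else if (q < p)%N then - W q p else 0.
Proof. by move=> hp hq; rewrite mxE !inordK. Qed.

Lemma skew_mx_skew W : skew_mx W + (skew_mx W)^T = 0.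
Proof.
apply/matrixP => i j; rewrite !mxE.
by case: ltngtP => _; rewrite ?subrr ?addNr ?addr0.
Qed.

Lemma skew_mx_entries (M : 'M[F]_n.+1) : M + M^T = 0 ->
  M = skew_mx (fun p q => M (inord p) (inord q)).
Proof.
move=> skM; apply/matrixP => i j; rewrite mxE !inord_val.
have Mji : M j i = - M i j.
  by apply/eqP; rewrite -addr_eq0; move/matrixP: skM => /(_ j i); rewrite !mxE => ->.
case: ltngtP => [//|_|/val_inj eij]; first by rewrite Mji opprK.
by rewrite -eij in Mji *; apply/eqP; rewrite -eqNr -Mji.
Qed.

End SkewMatrices.
Arguments skew_mx {F n} W.

Section AlternatingTrilinear.
Variables (F : numFieldType) (n : nat) (T : 'I_n -> 'I_n -> 'I_n -> F).
Hypotheses (T_swap12 : forall i j k, T j i k = - T i j k)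
           (T_swap23 : forall i j k, T i k j = - T i j k)
           (T_sorted : forall i j k : 'I_n, (i < j < k)%N -> T i j k = 0).

Lemma alternating3_eq0 (i j k : 'I_n) : T i j k = 0.
Proof.
have T_ii (i' k' : 'I_n) : T i' i' k' = 0 by apply/eqP; rewrite -eqNr -T_swap12.
have T_jj (i' j' : 'I_n) : T i' j' j' = 0 by apply/eqP; rewrite -eqNr -T_swap23.
have T_lt (i' j' k' : 'I_n) : (i' < j')%N -> T i' j' k' = 0.
  move=> ij; case: (ltngtP j' k') => [jk|kj|/val_inj <-]; last exact: T_jj.
  - by apply: T_sorted; rewrite ij.
  - rewrite -[LHS]opprK -T_swap23; case: (ltngtP i' k') => [ik|ki|/val_inj <-].
    + by rewrite T_sorted ?oppr0 // ik.
    + by rewrite -T_swap12 T_sorted ?oppr0 ?opprK // ki.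
    + by rewrite T_ii oppr0.
case: (ltngtP i j) => [ij|ji|/val_inj <-]; last exact: T_ii.
- exact: T_lt.
- by rewrite -[LHS]opprK -T_swap12 T_lt ?oppr0.
Qed.
End AlternatingTrilinear.

Section Codimension.
Variables (K : fieldType) (vT : vectType K).
Implicit Types U V : {vspace vT}.

Lemma codimv_cap_eq0 U V : (U <= V)%VS -> (\dim U - \dim (U :&: V))%N = 0%N.
Proof. by move/capv_idPl ->; rewrite subnn. Qed.

Lemma codimv_cap_eq1 U V u : u \in U -> u \notin V ->
  (forall x, x \in U -> exists k, x - k *: u \in V) ->
  (\dim U - \dim (U :&: V))%N = 1%N.
Proof.
move=> uU uV UVu.
have defU : U = (U :&: V + <[u]>)%VS.
  apply/eqP; rewrite eqEsubv subv_add capvSl -memvE uU !andbT.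
  apply/subvP => x xU; have [k xkV] := UVu x xU.
  rewrite -(subrK (k *: u) x) memv_add ?memvZ ?memv_line //.
  by rewrite memv_cap xkV andbT memvB ?memvZ.
have UVu0 : (U :&: V :&: <[u]> = 0)%VS.
  apply/eqP; rewrite -subv0; apply/subvP => v; rewrite !memv_cap memv0.
  case/andP => /andP[_ vV] /vlineP[k defv]; apply: contraNT uV => v0.
  have k0 : k != 0 by apply: contraNneq v0 => k0; rewrite defv k0 scale0r.
  by rewrite -(scalerK k0 u) -defv memvZ.
have u0 : u != 0 by apply: contraNneq uV => ->; rewrite mem0v.
by rewrite {1}defU dimv_disjoint_sum // dim_vline u0 addKn.
Qed.
End Codimension.

Section LieAlgebraGa.
Variable R : realFieldType.
Implicit Types (a : R) (w : 'M[R]_8) (f x y : 'rV[R]_8) (W : nat -> nat -> R).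

Lemma lie_br_basis a (i j : 'I_8) : lie_br a (e R i) (e R j) = br_basis a i.+1 j.+1.
Proof.
rewrite /lie_br (bigD1 i) //= [X in _ + X]big1 ?addr0 => [|k ki]; last first.
  by apply: big1 => l _; rewrite /e !mxE eqxx (negbTE ki) mul0r scale0r.
rewrite (bigD1 j) //= [X in _ + X]big1 ?addr0 => [|k kj].
  by rewrite /e !mxE !eqxx mulr1 scale1r.
by rewrite /e !mxE !eqxx (negbTE kj) mulr0 scale0r.
Qed.

Lemma bformN w x y : bform w (- x) y = - bform w x y.
Proof. by rewrite /bform !mulNmx mxE. Qed.

Lemma bformZ w c x y : bform w (c *: x) y = c * bform w x y.
Proof. by rewrite /bform -!scalemxAl mxE. Qed.

Lemma bform0 w y : bform w 0 y = 0.
Proof. by rewrite /bform !mul0mx mxE. Qed.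

Lemma bform_Xb_e w n (k : 'I_8) : bform w (Xb R n) (e R k) = w (inord n.-1) k.
Proof. by rewrite /bform /Xb /e trmx_delta -colE -rowE !mxE. Qed.

Lemma bform1_Xb f n : bform 1%:M (Xb R n) f = f 0 (inord n.-1).
Proof. by rewrite /bform /Xb mulmx1 -rowE !mxE. Qed.

Lemma d2_inord a w i j k : (i < 8)%N -> (j < 8)%N -> (k < 8)%N ->
  d2 a w (inord i) (inord j) (inord k) =
    - bform w (br_basis a i.+1 j.+1) (e R (inord k))
    + bform w (br_basis a i.+1 k.+1) (e R (inord j))
    - bform w (br_basis a j.+1 k.+1) (e R (inord i)).
Proof. by move=> hi hj hk; rewrite ffunE mxE !lie_br_basis !inordK. Qed.

Lemma d1_inord a f i j : (i < 8)%N -> (j < 8)%N ->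
  d1 a f (inord i) (inord j) = - bform 1%:M (br_basis a i.+1 j.+1) f.
Proof. by move=> hi hj; rewrite mxE lie_br_basis !inordK // /bform mulmx1. Qed.

Lemma bform_linear_mx c u v x y :
  bform (c *: u + v) x y = c * bform u x y + bform v x y.
Proof.
by rewrite /bform mulmxDr mulmxDl -scalemxAr -scalemxAl [LHS]mxE [X in X + _]mxE.
Qed.

Lemma d2_is_linear a : linear (d2 a).
Proof.
move=> c u v; apply/ffunP => i; rewrite !ffunE; apply/matrixP => j k.
by rewrite !mxE !bform_linear_mx; ring.
Qed.

Lemma cocycle_cond_is_linear a : linear (cocycle_cond a).
Proof.
move=> c u v; rewrite /cocycle_cond d2_is_linear; congr (_, _).
by rewrite linearD linearZ /= addrACA scalerDr.
Qed.

Lemma d1_is_linear a : linear (d1 a).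
Proof.
move=> c f g; apply/matrixP => i j; rewrite !mxE mulrN -opprD; congr (- _).
rewrite mulr_sumr -big_split; apply: eq_bigr => m _.
by rewrite !mxE mulrDr mulrCA.
Qed.

HB.instance Definition _ a := GRing.isLinear.Build R 'M[R]_8
  ('M[R]_8 * {ffun 'I_8 -> 'M[R]_8})%type *:%R (cocycle_cond a)
  (@cocycle_cond_is_linear a).
HB.instance Definition _ a :=
  GRing.isLinear.Build R 'rV[R]_8 'M[R]_8 *:%R (d1 a) (@d1_is_linear a).

Lemma memZ2 a w : (w \in Z2 a) = (w + w^T == 0) && (d2 a w == 0).
Proof. by rewrite /Z2 memv_ker lfunE /= xpair_eqE. Qed.

Lemma memB2P a w : reflect (exists f, w = d1 a f) (w \in B2 a).
Proof.
by apply: (iffP memv_imgP) => [[f _ ->]|[f ->]]; exists f; rewrite ?lfunE ?memvf.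
Qed.

Lemma br_basis_antisym a p q : br_basis a q p = - br_basis a p q.
Proof. by rewrite /br_basis; case: ltngtP; rewrite ?opprK ?oppr0. Qed.

Lemma d2_swap12 a w i j k : d2 a w j i k = - d2 a w i j k.
Proof.
by rewrite !ffunE !mxE !lie_br_basis (br_basis_antisym a i.+1 j.+1) bformN; ring.
Qed.

Lemma d2_swap23 a w i j k : d2 a w i k j = - d2 a w i j k.
Proof.
by rewrite !ffunE !mxE !lie_br_basis (br_basis_antisym a j.+1 k.+1) bformN; ring.
Qed.

Lemma skew_mx_cocycle a W :
  (forall i j k, (i < j)%N -> (j < k)%N -> (k < 8)%N ->
     d2 a (skew_mx W) (inord i) (inord j) (inord k) = 0) ->
  skew_mx W \in Z2 a.
Proof.
move=> d2W; rewrite memZ2 skew_mx_skew eqxx /=.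
suff d2W0 i j k : d2 a (skew_mx W) i j k = 0.
  by apply/eqP/ffunP => i; apply/matrixP => j k; rewrite d2W0 ffunE mxE.
move: i j k; apply: alternating3_eq0 => [||i j k /andP[ij jk]].
- exact: d2_swap12.
- exact: d2_swap23.
by rewrite -[i]inord_val -[j]inord_val -[k]inord_val d2W.
Qed.

Lemma Z2_d2_eq0 a w : w \in Z2 a ->
  forall i j k : nat, d2 a w (inord i) (inord j) (inord k) = 0.
Proof. by rewrite memZ2 => /andP[_ /eqP-> i j k]; rewrite ffunE mxE. Qed.

Lemma Z2_skew_mx a w : w \in Z2 a ->
  w = skew_mx (fun p q => w (inord p) (inord q)).
Proof. by rewrite memZ2 => /andP[/eqP /skew_mx_entries]. Qed.

Lemma Z2_entries a w : w \in Z2 a ->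
  skew_mx (fun p q => w (inord p) (inord q)) \in Z2 a.
Proof. by move=> wZ; rewrite -(Z2_skew_mx wZ). Qed.

Ltac expand_brackets :=
  rewrite /br_basis /= ?(bformN, bformZ, bform0, bform_Xb_e, bform1_Xb).

Ltac cocycle_identity dWijk :=
  have := dWijk; rewrite d2_inord //; expand_brackets; rewrite !skew_mx_inord //=; lra.

Lemma cocycle_zero_entries a W : skew_mx W \in Z2 a ->
  [/\ W 0 7 = 0, W 1 3 = 0, W 1 5 = 0, W 1 7 = 0 & W 2 4 = 0] /\
  [/\ W 2 6 = 0, W 2 7 = 0, W 3 4 = 0, W 3 5 = 0 & W 4 6 = 0].
Proof.
move/Z2_d2_eq0 => dW; split; split.
- by cocycle_identity (dW 1 2 7).
- by cocycle_identity (dW 0 1 3).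
- by cocycle_identity (dW 0 1 5).
- by cocycle_identity (dW 0 1 7).
- by cocycle_identity (dW 0 2 4).
- by cocycle_identity (dW 0 2 6).
- by cocycle_identity (dW 0 2 7).
- by cocycle_identity (dW 3 4 7).
- by cocycle_identity (dW 0 3 5).
- by cocycle_identity (dW 0 4 6).
Qed.

Lemma cocycle_linked_entries a W : skew_mx W \in Z2 a ->
  [/\ W 1 4 = W 0 3, W 3 7 = W 0 3, W 2 3 = - W 0 4 & W 4 7 = - W 0 4] /\
  [/\ W 1 6 = W 0 5, W 5 7 = a * W 0 5, W 2 5 = - W 0 6 & W 6 7 = - a * W 0 6].
Proof.
move/Z2_d2_eq0 => dW; split; split.
- by cocycle_identity (dW 0 1 4).
- by cocycle_identity (dW 0 3 7).
- by cocycle_identity (dW 0 2 3).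
- by cocycle_identity (dW 0 4 7).
- by cocycle_identity (dW 0 1 6).
- by cocycle_identity (dW 0 5 7).
- by cocycle_identity (dW 0 2 5).
- by cocycle_identity (dW 0 6 7).
Qed.

Lemma cocycle_central_entries a W : skew_mx W \in Z2 a ->
  [/\ W 4 5 = - W 3 6, (1 + a) * W 3 6 = 0 & a * W 5 6 = 0].
Proof.
move/Z2_d2_eq0 => dW; split.
- by cocycle_identity (dW 1 4 6).
- by cocycle_identity (dW 3 6 7).
- by cocycle_identity (dW 5 6 7).
Qed.

(* With 0-based indices: omega_m1 = X4*^X7* - X5*^X6*, omega_0 = X6*^X7*. *)
Definition omega_m1 : 'M[R]_8 :=
  skew_mx (fun p q => match p, q with 3, 6 => 1 | 4, 5 => -1 | _, _ => 0 end).

Definition omega_0 : 'M[R]_8 :=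
  skew_mx (fun p q => match p, q with 5, 6 => 1 | _, _ => 0 end).

(* Its coboundary agrees with W on the entries 01, 02, 12 and 0q for 3 <= q <= 6. *)
Definition cocycle_primitive W : 'rV[R]_8 :=
  \row_(m < 8) nth 0 [:: - W 1 2; - W 0 1 / 2; W 0 2 / 2; - W 0 3; W 0 4; - W 0 5; W 0 6; 0] m.

Lemma cocycle_decomposition a W : skew_mx W \in Z2 a ->
  skew_mx W - W 3 6 *: omega_m1 - W 5 6 *: omega_0 = d1 a (cocycle_primitive W).
Proof.
move=> wZ.
have [[z07 z13 z15 z17 z24] [z26 z27 z34 z35 z46]] := cocycle_zero_entries wZ.
have [[l14 l37 l23 l47] [l16 l57 l25 l67]] := cocycle_linked_entries wZ.
have [c45 _ _] := cocycle_central_entries wZ.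
apply/matrixP => i j; rewrite -[i]inord_val -[j]inord_val.
move: (nat_of_ord i) (ltn_ord i) (nat_of_ord j) (ltn_ord j) => p hp q hq.
rewrite d1_inord // !mxE !inordK //.
case: p hp => [|[|[|[|[|[|[|[|p]]]]]]]] // _; case: q hq => [|[|[|[|[|[|[|[|q]]]]]]]] // _.
all: expand_brackets; rewrite ?mxE ?inordK //=.
all: rewrite ?(z07, z13, z15, z17, z24, z26, z27, z34, z35, z46).
all: rewrite ?(l14, l37, l23, l47, l16, l57, l25, l67, c45).
all: clear -a W; lra.
Qed.

Lemma omega_m1_cocycle : omega_m1 \in Z2 (-1).
Proof.
apply: skew_mx_cocycle => i j k.
case: k => [|[|[|[|[|[|[|[|k]]]]]]]] //; case: j => [|[|[|[|[|[|[|[|j]]]]]]]] //;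
  case: i => [|[|[|[|[|[|[|[|i]]]]]]]] // _ _ _.
all: rewrite d2_inord //; expand_brackets; rewrite ?skew_mx_inord //=; lra.
Qed.

Lemma omega_0_cocycle : omega_0 \in Z2 0.
Proof.
apply: skew_mx_cocycle => i j k.
case: k => [|[|[|[|[|[|[|[|k]]]]]]]] //; case: j => [|[|[|[|[|[|[|[|j]]]]]]]] //;
  case: i => [|[|[|[|[|[|[|[|i]]]]]]]] // _ _ _.
all: rewrite d2_inord //; expand_brackets; rewrite ?skew_mx_inord //=; lra.
Qed.

Lemma coboundary_entries_vanish a f :
  d1 a f (inord 3) (inord 6) = 0 /\ d1 a f (inord 5) (inord 6) = 0.
Proof. by rewrite !d1_inord //; expand_brackets; rewrite oppr0. Qed.

Lemma omega_m1_notin_B2 a : omega_m1 \notin B2 a.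
Proof.
apply/negP => /memB2P[f /(congr1 (fun M : 'M[R]_8 => M (inord 3) (inord 6)))].
rewrite (coboundary_entries_vanish a f).1 /omega_m1 skew_mx_inord //=.
by move/eqP; rewrite oner_eq0.
Qed.

Lemma omega_0_notin_B2 a : omega_0 \notin B2 a.
Proof.
apply/negP => /memB2P[f /(congr1 (fun M : 'M[R]_8 => M (inord 5) (inord 6)))].
rewrite (coboundary_entries_vanish a f).2 /omega_0 skew_mx_inord //=.
by move/eqP; rewrite oner_eq0.
Qed.

Lemma cocycle_mod_B2 a w : w \in Z2 a ->
  w - (w (inord 3) (inord 6) *: omega_m1 + w (inord 5) (inord 6) *: omega_0) \in B2 a.
Proof.
move=> wZ; apply/memB2P; exists (cocycle_primitive (fun p q => w (inord p) (inord q))).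
by rewrite -(cocycle_decomposition (Z2_entries wZ)) -(Z2_skew_mx wZ) opprD addrA.
Qed.

Lemma b2_generic a : a != 0 -> a != -1 -> b2 a = 0%N.
Proof.
move=> a0 am1; apply/codimv_cap_eq0/subvP => w wZ.
have [_ /= w36 w56] := cocycle_central_entries (Z2_entries wZ).
have {}w36 : w (inord 3) (inord 6) = 0.
  by move/eqP: w36; rewrite mulf_eq0 addrC addr_eq0 (negbTE am1) => /eqP.
have {}w56 : w (inord 5) (inord 6) = 0.
  by move/eqP: w56; rewrite mulf_eq0 (negbTE a0) => /eqP.
by have := cocycle_mod_B2 wZ; rewrite w36 w56 !scale0r addr0 subr0.
Qed.

Lemma b2_m1 : b2 (-1 : R) = 1%N.
Proof.
apply: (codimv_cap_eq1 omega_m1_cocycle (omega_m1_notin_B2 _)) => w wZ.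
have [_ _ w56] := cocycle_central_entries (Z2_entries wZ).
have {}w56 : w (inord 5) (inord 6) = 0.
  by rewrite /= mulN1r in w56; apply: oppr_inj; rewrite w56 oppr0.
by exists (w (inord 3) (inord 6)); have := cocycle_mod_B2 wZ; rewrite w56 scale0r addr0.
Qed.

Lemma b2_0 : b2 (0 : R) = 1%N.
Proof.
apply: (codimv_cap_eq1 omega_0_cocycle (omega_0_notin_B2 _)) => w wZ.
have [_ w36 _] := cocycle_central_entries (Z2_entries wZ).
have {}w36 : w (inord 3) (inord 6) = 0 by rewrite /= addr0 mul1r in w36.
by exists (w (inord 5) (inord 6)); have := cocycle_mod_B2 wZ; rewrite w36 scale0r add0r.
Qed.

End LieAlgebraGa.

Theorem proposition3 (R : realType) :
  (forall alpha : R, -1 <= alpha <= 1 -> alpha != -1 -> alpha != 0 ->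
     b2 (-1 : R) = (b2 alpha).+1) /\
  (forall alpha beta : R, -1 <= alpha <= 1 -> alpha != -1 -> alpha != 0 ->
     (beta == 0) || (beta == -1) -> b2 beta = (b2 alpha).+1) /\
  b2 (0 : R) = b2 (-1 : R).
Proof.
split; first by move=> alpha _ am1 a0; rewrite b2_m1 (b2_generic a0 am1).
split; last by rewrite b2_0 b2_m1.
move=> alpha beta _ am1 a0 /orP[|] /eqP ->; rewrite (b2_generic a0 am1).
- exact: b2_0.
- exact: b2_m1.
Qed.
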